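(* Let $H$ be a cocommutative Hopf algebra, $M$ a left $H$-module, $\alpha\in H\otimes H$, and $m\in M$ an element that is not torsion (i.e. $hm=0$ with $h\in H$ implies $h=0$). Then $\alpha\otimes_H m=0$ in $(H\otimes H)\otimes_H M$ if and only if $\alpha=0$.
   Context: $H\otimes H$ is a right $H$-module via $\alpha\cdot h=\alpha\Delta(h)$, which defines $(H\otimes H)\otimes_H M$. *)

From HB Require Import structures.
From mathcomp Require Import all_boot all_order all_algebra.
Set Implicit Arguments. Unset Strict Implicit. Unset Printing Implicit Defensive.
Import Order.TTheory GRing.Theory Num.Theory.
Local Open Scope ring_scope.

(* A formal Z-linear combination of elements of X is a list of             *)
(* (coefficient, element) pairs; two formal combinations are equal in the  *)
(* free abelian group Z^(X) iff all their coefficients agree.             *)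

Definition fcoef (X : eqType) (s : seq (int * X)) (x : X) : int :=
  \sum_(p <- s | p.2 == x) p.1.

Definition in_subgroup (X : eqType) (G : seq (int * X) -> Prop)
    (s : seq (int * X)) : Prop :=
  exists gs : seq (int * seq (int * X)),
    (forall g, g \in gs -> G g.2) /\
    (forall x, fcoef s x = \sum_(g <- gs) g.1 * fcoef g.2 x).

(* Tensor product  X (x)_R Y  of a right R-module X and a left R-module Y,  *)
(* defined as the free abelian group on X * Y modulo the subgroup generated *)
(* by the usual relations.  The right module X is given by representatives *)
(* (type X) together with the relation xeq saying when two representatives *)
(* denote the same element; the relation (x,y) ~ (x',y) for xeq x x' makes  *)
(* the construction the free abelian group on (X/xeq) * Y modulo the usual  *)
(* biadditivity and balancing relations.  An element sum_i x_i (x) y_i is  *)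
(* represented by the list of pairs (x_i, y_i).                            *)

Section Tensor.
Variables (R : Type) (X : eqType) (xeq : X -> X -> Prop)
  (xadd : X -> X -> X) (ract : X -> R -> X)
  (Y : zmodType) (lact : R -> Y -> Y).

Definition tens_rel (g : seq (int * (X * Y))) : Prop :=
  [\/ exists x x' y, g = [:: (1%:Z, (xadd x x', y)); (-1, (x, y)); (-1, (x', y))],
      exists x y y', g = [:: (1%:Z, (x, y + y')); (-1, (x, y)); (-1, (x, y'))],
      exists x r y, g = [:: (1%:Z, (ract x r, y)); (-1, (x, lact r y))]
    | exists x x' y, xeq x x' /\ g = [:: (1%:Z, (x, y)); (-1, (x', y))]].

Definition tens_zero (t : seq (X * Y)) : Prop :=
  in_subgroup tens_rel [seq (1%:Z, p) | p <- t].

End Tensor.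

Section HopfDefs.
Variables (k : fieldType) (H : algType k).

Definition HH := seq (H * H).

Definition HH_zero (a : HH) : Prop :=
  tens_zero (fun x y : H => x = y) +%R (fun h (c : k) => c *: h)
            (fun (c : k) (h : H) => c *: h) a.

Definition HH_opp (a : HH) : HH := [seq (- p.1, p.2) | p <- a].
Definition HH_eq (a b : HH) : Prop := HH_zero (a ++ HH_opp b).
Definition HH_scale (c : k) (a : HH) : HH := [seq (c *: p.1, p.2) | p <- a].
Definition HH_mul (a b : HH) : HH :=
  [seq (p.1 * q.1, p.2 * q.2) | p <- a, q <- b].
Definition HH_swap (a : HH) : HH := [seq (p.2, p.1) | p <- a].

Definition HHH_zero (t : seq (HH * H)) : Prop :=
  tens_zero HH_eq cat (fun a (c : k) => HH_scale c a)
            (fun (c : k) (h : H) => c *: h) t.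
Definition HHH_eq (t u : seq (HH * H)) : Prop :=
  HHH_zero (t ++ [seq (p.1, - p.2) | p <- u]).

Variables (Delta : H -> HH) (eps : H -> k) (S : H -> H).

Definition Delta_id_Delta (h : H) : seq (HH * H) :=
  [seq ((Delta p.1), p.2) | p <- Delta h].
Definition id_Delta_Delta (h : H) : seq (HH * H) :=
  flatten [seq [seq ([:: (p.1, q.1)], q.2) | q <- Delta p.2] | p <- Delta h].

Definition hopf_algebra : Prop :=
      (forall (c : k) (g h : H), HH_eq (Delta (c *: g + h)) (HH_scale c (Delta g) ++ Delta h)) /\
      (forall g h : H, HH_eq (Delta (g * h)) (HH_mul (Delta g) (Delta h))) /\
      HH_eq (Delta 1) [:: (1, 1)] /\
      (forall h : H, HHH_eq (Delta_id_Delta h) (id_Delta_Delta h)) /\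
      (forall (c : k) (g h : H), eps (c *: g + h) = c * eps g + eps h)
        /\ (forall g h : H, eps (g * h) = eps g * eps h) /\ eps 1 = 1 /\
      (forall h : H, \sum_(p <- Delta h) eps p.1 *: p.2 = h
                  /\ \sum_(p <- Delta h) eps p.2 *: p.1 = h) /\
      (forall (c : k) (g h : H), S (c *: g + h) = c *: S g + S h) /\
      (forall h : H, \sum_(p <- Delta h) S p.1 * p.2 = eps h *: 1
                  /\ \sum_(p <- Delta h) p.1 * S p.2 = eps h *: 1).

Definition cocommutative : Prop := forall h : H, HH_eq (HH_swap (Delta h)) (Delta h).

Definition HH_ract (a : HH) (h : H) : HH := HH_mul a (Delta h).

Definition left_module (M : zmodType) (act : H -> M -> M) : Prop :=
  [/\ forall (g h : H) (m : M), act (g * h) m = act g (act h m),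
      forall m : M, act 1 m = m,
      forall (g h : H) (m : M), act (g + h) m = act g m + act h m
    & forall (h : H) (m n : M), act h (m + n) = act h m + act h n].

Definition not_torsion (M : zmodType) (act : H -> M -> M) (m : M) : Prop :=
  forall h : H, act h m = 0 -> h = 0.

Definition HHM_zero (M : zmodType) (act : H -> M -> M) (t : seq (HH * M)) : Prop :=
  tens_zero HH_eq cat HH_ract act t.

End HopfDefs.

From HB Require Import structures.
From mathcomp Require Import all_boot all_order all_algebra.
From mathcomp Require Import boolp classical_sets.
Set Implicit Arguments. Unset Strict Implicit. Unset Printing Implicit Defensive.
Import GRing.Theory.
Local Open Scope ring_scope.

(* The twist x (x) z |-> x S(z1) (x) z2 of H (x) H, with inverse
   u (x) v |-> u v1 (x) v2, intertwines the right action by Delta(h) with right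
   multiplication of the second factor by h.  Hence for every linear functional f on H,
   (x (x) z) (x) n |-> ((f (x) id)(twist (x (x) z))) n is well defined on
   (H (x) H) (x)_H M.  Applied to alpha (x) m = 0 it gives (f (x) id)(twist alpha) m = 0,
   so (f (x) id)(twist alpha) = 0 because m is not torsion.  Tensors in H (x) H are
   detected by the maps f (x) id (a separating functional exists by Zorn's lemma), so
   twist alpha = 0 and therefore alpha = 0. *)

Section FormalSums.
Variables (X : eqType) (G : seq (int * X) -> Prop).
Implicit Types (s : seq (int * X)) (x : X).

Definition fopp s := [seq (- p.1, p.2) | p <- s].
Definition fsum1 (t : seq X) := [seq (1%:Z, x) | x <- t].

Lemma fcoef_cat s s' x : fcoef (s ++ s') x = fcoef s x + fcoef s' x.
Proof. by rewrite /fcoef big_cat. Qed.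

Lemma fcoef_opp s x : fcoef (fopp s) x = - fcoef s x.
Proof. by rewrite /fcoef big_map sumrN. Qed.

Lemma in_subgroup_nil : in_subgroup G [::].
Proof. by exists [::]; split => // x; rewrite /fcoef !big_nil. Qed.

Lemma in_subgroup_ext s s' :
  (forall x, fcoef s x = fcoef s' x) -> in_subgroup G s -> in_subgroup G s'.
Proof. by move=> e [gs [Ggs cf]]; exists gs; split => // x; rewrite -e. Qed.

Lemma in_subgroup0 s : (forall x, fcoef s x = 0) -> in_subgroup G s.
Proof. by move=> s0; exists [::]; split => // x; rewrite s0 big_nil. Qed.

Lemma in_subgroup_cat s s' :
  in_subgroup G s -> in_subgroup G s' -> in_subgroup G (s ++ s').
Proof.
move=> [gs [Ggs cf]] [gs' [Ggs' cf']]; exists (gs ++ gs'); split.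
  by move=> g; rewrite mem_cat => /orP[/Ggs|/Ggs'].
by move=> x; rewrite fcoef_cat big_cat cf cf'.
Qed.

Lemma in_subgroup_opp s : in_subgroup G s -> in_subgroup G (fopp s).
Proof.
move=> [gs [Ggs cf]]; exists [seq (- g.1, g.2) | g <- gs]; split.
  by move=> g /mapP [g' /Ggs ? ->].
by move=> x; rewrite fcoef_opp cf big_map -sumrN; apply: eq_bigr => g _; rewrite mulNr.
Qed.

Lemma in_subgroup_gen s : G s -> in_subgroup G s.
Proof.
move=> Gs; exists [:: (1, s)]; split; first by move=> g; rewrite inE => /eqP ->.
by move=> x; rewrite big_seq1 mul1r.
Qed.

Definition eqmod s s' := in_subgroup G (s ++ fopp s').

Lemma eqmod_ext s s' : (forall x, fcoef s x = fcoef s' x) -> eqmod s s'.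
Proof. by move=> e; apply: in_subgroup0 => x; rewrite fcoef_cat fcoef_opp e subrr. Qed.

Lemma eqmod_refl s : eqmod s s.
Proof. exact: eqmod_ext. Qed.

Lemma eqmod_in_subgroup s s' : eqmod s s' -> in_subgroup G s' -> in_subgroup G s.
Proof.
move=> ss' Gs'; apply: in_subgroup_ext (in_subgroup_cat ss' Gs') => x.
by rewrite !fcoef_cat fcoef_opp subrK.
Qed.

Lemma eqmod_sym s s' : eqmod s s' -> eqmod s' s.
Proof.
move=> /in_subgroup_opp; apply: in_subgroup_ext => x.
by rewrite fcoef_opp !fcoef_cat !fcoef_opp opprD opprK addrC.
Qed.

Lemma eqmod_trans s1 s2 s3 : eqmod s1 s2 -> eqmod s2 s3 -> eqmod s1 s3.
Proof.
move=> e12 e23; apply: in_subgroup_ext (in_subgroup_cat e12 e23) => x.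
by rewrite !fcoef_cat !fcoef_opp addrA subrK.
Qed.

Lemma eqmod_cat s1 s1' s2 s2' :
  eqmod s1 s1' -> eqmod s2 s2' -> eqmod (s1 ++ s2) (s1' ++ s2').
Proof.
move=> e1 e2; apply: in_subgroup_ext (in_subgroup_cat e1 e2) => x.
by rewrite !fcoef_cat !fcoef_opp !fcoef_cat opprD addrACA.
Qed.

Lemma eqmod_perm s s' : perm_eq s s' -> eqmod s s'.
Proof. by move=> pss'; apply: eqmod_ext => x; apply: perm_big. Qed.

Lemma eqmod_gen2 a b : G [:: (1, a); (-1, b)] -> eqmod [:: (1, a)] [:: (1, b)].
Proof. exact: in_subgroup_gen. Qed.

Lemma eqmod_gen3 a b c :
  G [:: (1, a); (-1, b); (-1, c)] -> eqmod [:: (1, a)] [:: (1, b); (1, c)].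
Proof. exact: in_subgroup_gen. Qed.

Lemma eqmod_double_nil s : eqmod s (s ++ s) -> eqmod s [::].
Proof.
move=> /in_subgroup_opp; apply: in_subgroup_ext => x.
by rewrite cats0 fcoef_opp fcoef_cat fcoef_opp fcoef_cat opprB addrK.
Qed.

End FormalSums.

Section BalancedMaps.
Variables (R : Type) (X : eqType) (xeq : X -> X -> Prop)
  (xadd : X -> X -> X) (ract : X -> R -> X) (Y : zmodType) (lact : R -> Y -> Y).
Variables (U : zmodType) (F : X -> Y -> U).
Hypothesis F_addl : forall x x' y, F (xadd x x') y = F x y + F x' y.
Hypothesis F_addr : forall x y y', F x (y + y') = F x y + F x y'.
Hypothesis F_balanced : forall x r y, F (ract x r) y = F x (lact r y).
Hypothesis F_xeq : forall x x' y, xeq x x' -> F x y = F x' y.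

Let rel := tens_rel xeq xadd ract lact.

Definition feval (s : seq (int * (X * Y))) := \sum_(q <- s) F q.2.1 q.2.2 *~ q.1.

Lemma feval_cat s s' : feval (s ++ s') = feval s + feval s'.
Proof. by rewrite /feval big_cat. Qed.

Lemma feval_opp s : feval (fopp s) = - feval s.
Proof. by rewrite /feval big_map -sumrN; apply: eq_bigr => q _; rewrite mulrNz. Qed.

Lemma feval_tens_rel g : rel g -> feval g = 0.
Proof.
case=> [[x [x' [y ->]]]|[x [y [y' ->]]]|[x [r [y ->]]]|[x [x' [y [xx' ->]]]]];
  rewrite /feval !big_cons big_nil /= mulr1z ?mulrN1z addr0.
- by rewrite F_addl -opprD subrr.
- by rewrite F_addr -opprD subrr.
- by rewrite F_balanced subrr.
- by rewrite (F_xeq _ xx') subrr.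
Qed.

Lemma feval_fcoef s (D : seq (X * Y)) : uniq D -> {subset map snd s <= D} ->
  feval s = \sum_(x <- D) F x.1 x.2 *~ fcoef s x.
Proof.
move=> uD sD; rewrite /feval /fcoef.
transitivity (\sum_(q <- s) \sum_(x <- D | q.2 == x) F x.1 x.2 *~ q.1).
  apply: eq_big_seq => q qs; rewrite -big_filter.
  have -> : [seq x <- D | q.2 == x] = [:: q.2].
    rewrite (@eq_filter _ _ (pred1 q.2)); last by move=> z; rewrite /= eq_sym.
    by apply: filter_pred1_uniq => //; apply/sD/map_f.
  by rewrite big_seq1.
under eq_bigr do rewrite big_mkcond.
rewrite exchange_big /=; apply: eq_bigr => x _.
rewrite mulrz_sumr [RHS]big_mkcond /=; apply: eq_bigr => q _.
by case: ifP => // /eqP ->.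
Qed.

Lemma feval_in_subgroup s : in_subgroup rel s -> feval s = 0.
Proof.
move=> [gs [rel_gs cf]].
set D := undup (map snd s ++ flatten [seq map snd g.2 | g <- gs]).
have uD : uniq D by exact: undup_uniq.
have sgD g : g \in gs -> {subset map snd g.2 <= D}.
  move=> gg x xg; rewrite mem_undup mem_cat; apply/orP; right.
  by apply/flattenP; exists (map snd g.2) => //; apply: map_f.
rewrite (@feval_fcoef s D) //; last by move=> x xs; rewrite mem_undup mem_cat xs.
under eq_bigr => x _ do rewrite cf.
transitivity (\sum_(g <- gs) feval g.2 *~ g.1).
  rewrite [RHS]big_seq_cond.
  under [RHS]eq_bigr => g /andP[gg _] do rewrite (feval_fcoef uD (sgD g gg)) mulrz_suml.
  rewrite -big_seq_cond exchange_big /=; apply: eq_bigr => x _.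
  by rewrite mulrz_sumr; apply: eq_bigr => g _; rewrite mulrzA_C.
by rewrite big_seq big1 // => g /rel_gs /feval_tens_rel ->; rewrite mul0rz.
Qed.

Lemma feval_fsum1 t : feval (fsum1 t) = \sum_(p <- t) F p.1 p.2.
Proof. by rewrite /feval big_map; apply: eq_bigr => p _; rewrite mulr1z. Qed.

Lemma tens_zero_balanced t : tens_zero xeq xadd ract lact t -> \sum_(p <- t) F p.1 p.2 = 0.
Proof. by move=> /feval_in_subgroup; rewrite feval_fsum1. Qed.

Lemma eqmod_balanced t t' :
  eqmod rel (fsum1 t) (fsum1 t') -> \sum_(p <- t) F p.1 p.2 = \sum_(p <- t') F p.1 p.2.
Proof.
by move=> /feval_in_subgroup /eqP; rewrite feval_cat feval_opp !feval_fsum1 subr_eq0 => /eqP.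
Qed.

End BalancedMaps.

Section Separation.
Variables (k : fieldType) (V : lmodType k).
Local Open Scope classical_set_scope.

Definition subspace_closed (A : set V) := forall c x y, A x -> A y -> A (c *: x + y).

Lemma maximal_subspace_avoiding (W : set V) (u : V) :
  W 0 -> subspace_closed W -> ~ W u ->
  exists A, [/\ subspace_closed A, W `<=` A, ~ A u & forall x, exists c, A (x - c *: u)].
Proof.
move=> W0 clW Wu.
(* the empty chain has union [set0], which is why [P] also admits [set0] *)
pose P := [set A : set V | [/\ subspace_closed A, ~ A u & W `<=` A \/ A = set0]].
have [A [[clA Au WA] Amax]] : exists A, P A /\ forall B, A `<` B -> ~ P B.
  apply: Zorn_bigcup => F FP Ftot; split.
  - move=> c x y [X FX Xx] [Y FY Yy].
    have [XY|YX] := Ftot _ _ FX FY.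
    + by exists Y => //; have [+ _ _] := FP _ FY; apply => //; exact: XY.
    + by exists X => //; have [+ _ _] := FP _ FX; apply => //; exact: YX.
  - by move=> [X FX Xu]; have [_ + _] := FP _ FX; apply.
  - have [[X FX WX]|nX] := pselect (exists2 X, F X & W `<=` X).
      by left => w Ww; exists X => //; exact: WX.
    right; apply/seteqP; split => // x [X FX Xx].
    have [_ _ [WX|X0]] := FP _ FX; first by case: nX; exists X.
    by move: Xx; rewrite X0.
have {}WA : W `<=` A.
  case: WA => // A0; exfalso; apply: (Amax W); last by split => //; left.
  by rewrite A0; split => // /(_ 0 W0).
exists A; split => // x.
have [Ax|nAx] := pselect (A x); first by exists 0; rewrite scale0r subr0.
pose B := [set y | exists d, A (y - d *: x)].
have AB : A `<` B.
  split; first by move=> y Ay; exists 0; rewrite scale0r subr0.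
  by move=> BA; apply/nAx/BA; exists 1; rewrite scale1r subrr; apply: WA.
have [d Bu] : B u.
  apply: contrapT => nBu; apply: (Amax B AB); split => //; last first.
    by left => w Ww; exists 0; rewrite scale0r subr0; exact: WA.
  move=> c y z [d1 Ay] [d2 Az]; exists (c * d1 + d2).
  have -> : c *: y + z - (c * d1 + d2) *: x = c *: (y - d1 *: x) + (z - d2 *: x).
    by rewrite scalerDl -scalerA scalerBr opprD addrACA.
  exact: clA.
have d0 : d != 0 by apply/eqP => d0; apply: Au; move: Bu; rewrite d0 scale0r subr0.
exists d^-1.
have -> : x - d^-1 *: u = (- d^-1) *: (u - d *: x) + 0.
  by rewrite addr0 scalerBr scalerA mulNr mulVf // scaleN1r opprK addrC scaleNr.
by apply: clA => //; apply: WA.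
Qed.

Lemma functional_vanishing_on (A : set V) (u : V) :
  subspace_closed A -> ~ A u -> (forall x, exists c, A (x - c *: u)) ->
  exists f : {scalar V}, f u = 1 /\ forall w, A w -> f w = 0.
Proof.
move=> clA Au Ax.
have A0 : A 0 by have [e Ae] := Ax 0; have := clA (-1) _ _ Ae Ae; rewrite scaleN1r addNr.
have coef_uniq x c c' : A (x - c *: u) -> A (x - c' *: u) -> c = c'.
  move=> Ac Ac'; apply/eqP; apply: contraT => cc'; exfalso; apply: Au.
  have cc'0 : c' - c != 0 by rewrite subr_eq0 eq_sym.
  have -> : u = (c' - c)^-1 *: (x - c *: u) + (- (c' - c)^-1 *: (x - c' *: u) + 0).
    rewrite addr0 scaleNr -scalerBr opprD opprK addrACA subrr add0r [_ + c' *: u]addrC -scalerBl.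
    by rewrite scalerA mulVf // scale1r.
  by apply: (clA) => //; apply: (clA).
pose f x := projT1 (cid (Ax x)).
have fP x : A (x - f x *: u) by rewrite /f; case: cid.
have flin : scalar f.
  move=> c x y; apply: coef_uniq (fP _) _.
  have -> : c *: x + y - (c * f x + f y) *: u = c *: (x - f x *: u) + (y - f y *: u).
    by rewrite scalerDl -scalerA scalerBr opprD addrACA.
  exact: clA.
exists (HB.pack_for {scalar V} f (GRing.isLinear.Build k V k *%R f flin)); split => /=.
  by apply: coef_uniq (fP u) _; rewrite scale1r subrr.
by move=> w Aw; apply: coef_uniq (fP w) _; rewrite scale0r subr0.
Qed.

Lemma separating_functional (W : set V) (u : V) :
  W 0 -> subspace_closed W -> ~ W u ->
  exists f : {scalar V}, f u = 1 /\ forall w, W w -> f w = 0.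
Proof.
move=> W0 clW Wu; have [A [clA WA Au Ax]] := maximal_subspace_avoiding W0 clW Wu.
have [f [fu fA]] := functional_vanishing_on clA Au Ax.
by exists f; split => // w /WA /fA.
Qed.

End Separation.

Lemma linear_morphisms (R : pzRingType) (U V : lmodType R) (f : U -> V) :
  linear f ->
  [/\ {morph f : x y / x + y}, {morph f : x / - x} & forall c, {morph f : x / c *: x}].
Proof.
move=> lin_f; pose fL := HB.pack_for {linear U -> V} f (GRing.isLinear.Build R U V _ f lin_f).
by split; [exact: (linearD fL) | exact: (linearN fL) | exact: (linearZ_LR fL)].
Qed.

Section KTensor.
Variables (k : fieldType) (V W : lmodType k).
Implicit Types (t : seq (V * W)) (v : V) (w : W).

Definition ktens_rel := tens_rel (fun v v' : V => v = v') +%R (fun v (c : k) => c *: v)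
  (fun (c : k) (w : W) => c *: w).
Definition ktens_zero t := in_subgroup ktens_rel (fsum1 t).
Definition ktens_eq t t' := eqmod ktens_rel (fsum1 t) (fsum1 t').

Lemma ktens_eq_zero t t' : ktens_eq t t' -> ktens_zero t' -> ktens_zero t.
Proof. exact: eqmod_in_subgroup. Qed.

Lemma ktens_eq_refl t : ktens_eq t t.
Proof. exact: eqmod_refl. Qed.

Lemma ktens_eq_sym t t' : ktens_eq t t' -> ktens_eq t' t.
Proof. exact: eqmod_sym. Qed.

Lemma ktens_eq_trans t1 t2 t3 : ktens_eq t1 t2 -> ktens_eq t2 t3 -> ktens_eq t1 t3.
Proof. exact: eqmod_trans. Qed.

Lemma ktens_eq_cat t1 t1' t2 t2' :
  ktens_eq t1 t1' -> ktens_eq t2 t2' -> ktens_eq (t1 ++ t2) (t1' ++ t2').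
Proof. by rewrite /ktens_eq /fsum1 !map_cat; apply: eqmod_cat. Qed.

Lemma ktens_eq_perm t t' : perm_eq t t' -> ktens_eq t t'.
Proof. by move=> tt'; apply/eqmod_perm/perm_map. Qed.

Lemma ktens_eq_addl v v' w : ktens_eq [:: (v + v', w)] [:: (v, w); (v', w)].
Proof. by apply: eqmod_gen3; apply: Or41; exists v, v', w. Qed.

Lemma ktens_eq_addr v w w' : ktens_eq [:: (v, w + w')] [:: (v, w); (v, w')].
Proof. by apply: eqmod_gen3; apply: Or42; exists v, w, w'. Qed.

Lemma ktens_eq_scale c v w : ktens_eq [:: (c *: v, w)] [:: (v, c *: w)].
Proof. by apply: eqmod_gen2; apply: Or43; exists v, c, w. Qed.

Lemma ktens_eq_0l w : ktens_eq [:: (0, w)] [::].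
Proof. by apply: eqmod_double_nil; have := ktens_eq_addl 0 0 w; rewrite addr0. Qed.

Lemma ktens_eq_0r v : ktens_eq [:: (v, 0)] [::].
Proof. by apply: eqmod_double_nil; have := ktens_eq_addr v 0 0; rewrite addr0. Qed.

Section Bilinear.
Variables (U : lmodType k) (B : V -> W -> U).

Definition bilinear_map := (forall w, linear (B^~ w)) /\ (forall v, linear (B v)).
Definition tens_eval t := \sum_(p <- t) B p.1 p.2.

Hypothesis B_bilinear : bilinear_map.

Lemma bilinear_balanced :
  [/\ forall v v' w, B (v + v') w = B v w + B v' w,
      forall v w w', B v (w + w') = B v w + B v w'
    & forall v c w, B (c *: v) w = B v (c *: w)].
Proof.
have [linl linr] := B_bilinear.
split=> [v v' w | v w w' | v c w]; first by have [] := linear_morphisms (linl w).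
  by have [] := linear_morphisms (linr v).
by have [_ _ ->] := linear_morphisms (linl w); have [_ _ ->] := linear_morphisms (linr v).
Qed.

Lemma ktens_zero_eval t : ktens_zero t -> tens_eval t = 0.
Proof.
have [Dl Dr Z] := bilinear_balanced.
by apply: (tens_zero_balanced (F := B)) => // v v' w ->.
Qed.

Lemma ktens_eq_eval t t' : ktens_eq t t' -> tens_eval t = tens_eval t'.
Proof.
have [Dl Dr Z] := bilinear_balanced.
by apply: (eqmod_balanced (F := B)) => // v v' w ->.
Qed.

End Bilinear.

Lemma contract_bilinear (f : {scalar V}) : bilinear_map (fun v w => f v *: w).
Proof.
split=> [w c v v' | v c w w'] /=; first by rewrite linearD linearZ /= scalerDl scalerA.
by rewrite scalerDr !scalerA mulrC.
Qed.

Fixpoint in_span (L : seq V) v : Prop :=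
  if L is v0 :: L' then exists c v', in_span L' v' /\ v = c *: v0 + v' else v = 0.

Lemma in_span0 L : in_span L 0.
Proof. by elim: L => [|v0 L IH] //=; exists 0, 0; rewrite scale0r addr0. Qed.

Lemma in_span_closed L : subspace_closed (in_span L).
Proof.
elim: L => [|v0 L IH] c x y /=; first by move=> -> ->; rewrite scaler0 addr0.
move=> [a [x' [Lx' ->]]] [b [y' [Ly' ->]]]; exists (c * a + b), (c *: x' + y').
by split; [exact: IH | rewrite scalerDr scalerDl scalerA addrACA].
Qed.

Lemma in_span_mem L v : v \in L -> in_span L v.
Proof.
elim: L => [|v0 L IH] //; rewrite inE => /predU1P[->|vL] /=.
  by exists 1, 0; rewrite scale1r addr0; split => //; exact: in_span0.
by exists 0, v; rewrite scale0r add0r; split => //; exact: IH.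
Qed.

Lemma ktens_eq_absorb t v w : in_span (map fst t) v ->
  exists t', ktens_eq ((v, w) :: t) t' /\ size t' = size t.
Proof.
elim: t v => [|[v0 w0] t IH] v /=.
  by move=> ->; exists [::]; split => //; exact: ktens_eq_0l.
move=> [c [v' [spv' ->]]]; have [t' [vt' st']] := IH _ spv'.
exists ((v0, w0 + c *: w) :: t'); split; last by rewrite /= st'.
have cat1 t1 t2 t3 : ktens_eq t1 t2 -> ktens_eq (t1 ++ t3) (t2 ++ t3).
  by move=> e; apply: ktens_eq_cat e (ktens_eq_refl _).
apply: (@ktens_eq_trans _ ([:: (c *: v0, w); (v', w)] ++ (v0, w0) :: t)).
  exact: (cat1 [:: _] _ _ (ktens_eq_addl _ _ _)).
apply: (@ktens_eq_trans _ ([:: (v0, c *: w); (v', w)] ++ (v0, w0) :: t)).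
  exact: (cat1 _ _ _ (cat1 [:: _] [:: _] _ (ktens_eq_scale _ _ _))).
apply: (@ktens_eq_trans _ ([:: (v0, w0); (v0, c *: w)] ++ (v', w) :: t)).
  by apply: ktens_eq_perm; rewrite (perm_catCA [:: _; _] [:: _] t).
exact: (ktens_eq_cat (ktens_eq_sym (ktens_eq_addr _ _ _)) vt').
Qed.

(* Induction on the length: either the first left factor lies in the span of the
   others and its term can be absorbed, or a functional separating it from that
   span forces the first right factor to vanish. *)
Lemma ktens_zero_contract t :
  (forall f : {scalar V}, \sum_(p <- t) f p.1 *: p.2 = 0) -> ktens_zero t.
Proof.
have [n] := ubnP (size t); elim: n t => // n IH [|[v w] t] /= /ltnSE le_tn ht.
  exact: in_subgroup_nil.
have [spv|nspv] := pselect (in_span (map fst t) v).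
  have [t' [tt' st']] := ktens_eq_absorb w spv.
  apply: ktens_eq_zero (tt') (IH _ _ _); first by rewrite st'.
  by move=> f; have := ktens_eq_eval (contract_bilinear f) tt'; rewrite /tens_eval => <-.
have [f [fv ft]] := separating_functional (in_span0 _) (@in_span_closed _) nspv.
have w0 : w = 0.
  have := ht f; rewrite big_cons fv scale1r big_seq big1 ?addr0 // => p pt.
  by rewrite ft ?scale0r //; apply/in_span_mem/map_f.
subst w; apply: ktens_eq_zero (ktens_eq_cat (ktens_eq_0r v) (ktens_eq_refl t)) _.
by apply: IH => // g; have := ht g; rewrite big_cons scaler0 add0r.
Qed.

End KTensor.

Section HopfAlgebra.
Variables (k : fieldType) (H : algType k) (Delta : H -> HH H) (eps : H -> k) (S : H -> H).
Hypothesis Delta_linear :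
  forall (c : k) (g h : H), HH_eq (Delta (c *: g + h)) (HH_scale c (Delta g) ++ Delta h).
Hypothesis DeltaM : forall g h : H, HH_eq (Delta (g * h)) (HH_mul (Delta g) (Delta h)).
Hypothesis coassociative :
  forall h : H, HHH_eq (Delta_id_Delta Delta h) (id_Delta_Delta Delta h).
Hypothesis epsM : forall g h : H, eps (g * h) = eps g * eps h.
Hypothesis counit : forall h : H,
  \sum_(p <- Delta h) eps p.1 *: p.2 = h /\ \sum_(p <- Delta h) eps p.2 *: p.1 = h.
Hypothesis S_linear : linear S.
Hypothesis antipode : forall h : H,
  \sum_(p <- Delta h) S p.1 * p.2 = eps h *: 1 /\ \sum_(p <- Delta h) p.1 * S p.2 = eps h *: 1.

HB.instance Definition _ := GRing.isLinear.Build k H H *:%R S S_linear.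

Section Eval.
Variables (U : lmodType k).
Implicit Types (B : H -> H -> U) (a b : HH H).

Lemma HH_zero_eval B a : bilinear_map B -> HH_zero a -> tens_eval B a = 0.
Proof. by move=> Bbil; apply: (@ktens_zero_eval k H H U B Bbil a). Qed.

Lemma HH_eq_eval B a b : bilinear_map B -> HH_eq a b -> tens_eval B a = tens_eval B b.
Proof.
move=> Bbil /(HH_zero_eval Bbil); rewrite /tens_eval big_cat big_map /=.
have BN v w : B (- v) w = - B v w by have [_ -> _] := linear_morphisms (Bbil.1 w).
rewrite [X in _ + X](eq_bigr (fun p => - B p.1 p.2)) => [|p _]; last exact: BN.
by rewrite sumrN => /eqP; rewrite subr_eq0 => /eqP.
Qed.

Lemma eval_Delta_linear B : bilinear_map B -> linear (fun h => tens_eval B (Delta h)).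
Proof.
move=> Bbil c g h; rewrite (HH_eq_eval Bbil (Delta_linear c g h)) /tens_eval big_cat.
rewrite big_map scaler_sumr; congr (_ + _); apply: eq_bigr => p _ /=.
by have [_ _ ->] := linear_morphisms (Bbil.1 p.2).
Qed.

Lemma eval_DeltaM B g h : bilinear_map B ->
  tens_eval B (Delta (g * h)) =
  \sum_(p <- Delta g) \sum_(q <- Delta h) B (p.1 * q.1) (p.2 * q.2).
Proof. by move=> Bbil; rewrite (HH_eq_eval Bbil (DeltaM g h)) /tens_eval big_allpairs_dep. Qed.

Definition trilinear_map (T : H -> H -> H -> U) :=
  [/\ forall y z, linear (fun x => T x y z), forall x z, linear (fun y => T x y z)
    & forall x y, linear (T x y)].

Lemma coassoc_eval T h : trilinear_map T ->
  \sum_(p <- Delta h) \sum_(q <- Delta p.1) T q.1 q.2 p.2 =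
  \sum_(p <- Delta h) \sum_(q <- Delta p.2) T p.1 q.1 q.2.
Proof.
move=> [lin1 lin2 lin3].
have Bbil z : bilinear_map (fun x y => T x y z) by split=> [y|x]; [exact: lin1|exact: lin2].
pose F (a : HH H) (z : H) := tens_eval (fun x y => T x y z) a.
have F_cat a a' z : F (a ++ a') z = F a z + F a' z by rewrite /F /tens_eval big_cat.
have F_add a z z' : F a (z + z') = F a z + F a z'.
  rewrite /F /tens_eval -big_split; apply: eq_bigr => p _.
  by have [-> _ _] := linear_morphisms (lin3 p.1 p.2).
have F_scale a c z : F (HH_scale c a) z = F a (c *: z).
  rewrite /F /tens_eval big_map; apply: eq_bigr => p _ /=.
  have [_ _ ->] := linear_morphisms (lin1 p.2 z).
  by have [_ _ ->] := linear_morphisms (lin3 p.1 p.2).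
have F_eq a a' z : HH_eq a a' -> F a z = F a' z by apply: HH_eq_eval.
have := tens_zero_balanced F_cat F_add F_scale F_eq (coassociative h).
rewrite big_cat !big_map /F /tens_eval /id_Delta_Delta big_flatten big_map /=.
move/eqP; rewrite addr_eq0 => /eqP ->; rewrite -sumrN; apply: eq_bigr => p _.
rewrite big_map -sumrN; apply: eq_bigr => q _; rewrite big_seq1 /=.
by have [_ -> _] := linear_morphisms (lin3 p.1 q.1); rewrite opprK.
Qed.

End Eval.

Lemma antipodeD x y : S (x + y) = S x + S y.
Proof. exact: linearD. Qed.

Lemma antipodeZ c x : S (c *: x) = c *: S x.
Proof. exact: linearZ. Qed.

Ltac linear_norm := do ?[rewrite antipodeD | rewrite antipodeZ | rewrite mulrDl
  | rewrite mulrDr | rewrite scalerDl | rewrite scalerDr | rewrite scalerA | rewrite -scalerAl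
  | rewrite -scalerAr | rewrite linearD | rewrite scalarZ]; try by rewrite mulrC.
Ltac linear_sum_norm := repeat (rewrite scaler_sumr -big_split; apply: eq_bigr => ? _).

Lemma mulr_antipode_sumr a x : \sum_(s <- Delta x) a * s.1 * S s.2 = eps x *: a.
Proof.
by under eq_bigr do rewrite -mulrA; rewrite -mulr_sumr (antipode x).2 -scalerAr mulr1.
Qed.

Lemma mulr_antipode_suml a x : \sum_(s <- Delta x) a * S s.1 * s.2 = eps x *: a.
Proof.
by under eq_bigr do rewrite -mulrA; rewrite -mulr_sumr (antipode x).1 -scalerAr mulr1.
Qed.

(* both sides of [antipodeM] equal S(g1 h1) g2 h2 S(h3) S(g3) *)
Lemma antipodeM_expand g h : S (g * h) =
  \sum_(p <- Delta g) \sum_(r <- Delta p.1) \sum_(q <- Delta h) \sum_(s <- Delta q.1)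
    S (r.1 * s.1) * r.2 * s.2 * S q.2 * S p.2.
Proof.
transitivity (\sum_(p <- Delta g) \sum_(q <- Delta h) (eps p.2 * eps q.2) *: S (p.1 * q.1)).
  rewrite -{1}(counit g).2 -{1}(counit h).2 mulr_suml linear_sum.
  apply: eq_bigr => p _; rewrite mulr_sumr linear_sum; apply: eq_bigr => q _.
  by rewrite -scalerAl -scalerAr scalerA linearZ.
transitivity (\sum_(p <- Delta g) \sum_(q <- Delta h) \sum_(r <- Delta p.2)
   \sum_(s <- Delta q.2) S (p.1 * q.1) * r.1 * s.1 * S s.2 * S r.2).
  apply: eq_bigr => p _; apply: eq_bigr => q _.
  under eq_bigr do rewrite -mulr_suml mulr_antipode_sumr -scalerAl.
  by rewrite -scaler_sumr mulr_antipode_sumr scalerA mulrC.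
transitivity (\sum_(p <- Delta g) \sum_(r <- Delta p.1) \sum_(q <- Delta h)
   \sum_(s <- Delta q.2) S (r.1 * q.1) * r.2 * s.1 * S s.2 * S p.2).
  under eq_bigr do rewrite exchange_big.
  pose T a b c := \sum_(q <- Delta h) \sum_(s <- Delta q.2) S (a * q.1) * b * s.1 * S s.2 * S c.
  have Ttri : trilinear_map T by split=> ? ? ? ? ? /=; rewrite /T; linear_sum_norm; linear_norm.
  by have := coassoc_eval g Ttri; rewrite /T => ->.
apply: eq_bigr => p _; apply: eq_bigr => r _.
pose T a b c := S (r.1 * a) * r.2 * b * S c * S p.2.
have Ttri : trilinear_map T by split=> ? ? ? ? ? /=; rewrite /T; linear_norm.
by have := coassoc_eval h Ttri; rewrite /T => ->.
Qed.

Lemma antipodeM g h : S (g * h) = S h * S g.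
Proof.
rewrite antipodeM_expand.
transitivity (\sum_(p <- Delta g) \sum_(q <- Delta h) (eps p.1 * eps q.1) *: (S q.2 * S p.2)).
  apply: eq_bigr => p _; rewrite exchange_big /=; apply: eq_bigr => q _.
  pose B u v := S u * v.
  have Bbil : bilinear_map B by split=> ? ? ? ? /=; rewrite /B; linear_norm.
  have := eval_DeltaM p.1 q.1 Bbil; rewrite /tens_eval /B (antipode _).1 epsM => e.
  rewrite -[X in _ *: X]mul1r scalerAl e mulr_suml; apply: eq_bigr => r _.
  by rewrite mulr_suml; apply: eq_bigr => s _; rewrite !mulrA.
rewrite -{2}(counit g).1 -{2}(counit h).1 !linear_sum mulr_suml exchange_big /=.
apply: eq_bigr => p _; rewrite mulr_sumr; apply: eq_bigr => q _.
by rewrite !linearZ -scalerAl -scalerAr scalerA mulrC.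
Qed.

Definition twist_contract (f : {scalar H}) x z :=
  tens_eval (fun u v => f (x * S u) *: v) (Delta z).

Lemma twist_contract_bilinear f : bilinear_map (twist_contract f).
Proof.
split=> [z c x x' | x] /=.
  rewrite /twist_contract /tens_eval scaler_sumr -big_split.
  by apply: eq_bigr => p _ /=; linear_norm.
by apply: eval_Delta_linear; split=> ? ? ? ? /=; linear_norm.
Qed.

(* the twist x (x) z |-> x S(z1) (x) z2 turns the diagonal action of h into
   right multiplication of the second factor by h *)
Lemma twist_contract_mul f x z h :
  \sum_(q <- Delta h) twist_contract f (x * q.1) (z * q.2) = twist_contract f x z * h.
Proof.
transitivity (\sum_(p <- Delta z) \sum_(q <- Delta h) \sum_(r <- Delta q.2)
    f (x * q.1 * (S r.1 * S p.1)) *: (p.2 * r.2)).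
  rewrite exchange_big /=; apply: eq_bigr => q _.
  rewrite /twist_contract eval_DeltaM; last by split=> ? ? ? ? /=; linear_norm.
  by apply: eq_bigr => p _; apply: eq_bigr => r _; rewrite antipodeM.
transitivity (\sum_(p <- Delta z) \sum_(q <- Delta h) \sum_(r <- Delta q.1)
    f (x * r.1 * (S r.2 * S p.1)) *: (p.2 * q.2)).
  apply: eq_bigr => p _.
  pose T a b c := f (x * a * (S b * S p.1)) *: (p.2 * c).
  have Ttri : trilinear_map T by split=> ? ? ? ? ? /=; rewrite /T; linear_norm.
  by have := coassoc_eval h Ttri; rewrite /T => ->.
rewrite /twist_contract /tens_eval mulr_suml; apply: eq_bigr => p _.
transitivity (\sum_(q <- Delta h) (eps q.1 * f (x * S p.1)) *: (p.2 * q.2)).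
  apply: eq_bigr => q _; rewrite -scaler_suml -linear_sum.
  under eq_bigr do rewrite mulrA.
  by rewrite -mulr_suml mulr_antipode_sumr -scalerAl linearZ.
rewrite -scalerAl -{2}(counit h).1 mulr_sumr scaler_sumr; apply: eq_bigr => q _.
by rewrite -scalerAr scalerA mulrC.
Qed.

Definition untwist_contract (g : {scalar H}) u v :=
  tens_eval (fun v1 v2 => g (u * v1) *: v2) (Delta v).

Lemma untwist_contract_bilinear g : bilinear_map (untwist_contract g).
Proof.
split=> [v c u u' | u] /=.
  rewrite /untwist_contract /tens_eval scaler_sumr -big_split.
  by apply: eq_bigr => p _ /=; linear_norm.
by apply: eval_Delta_linear; split=> ? ? ? ? /=; linear_norm.
Qed.

Lemma untwist_twist g x z :
  \sum_(p <- Delta z) untwist_contract g (x * S p.1) p.2 = g x *: z.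
Proof.
pose T (a b c : H) := g (x * S a * b) *: c.
have Ttri : trilinear_map T by split=> ? ? ? ? ? /=; rewrite /T; linear_norm.
have := coassoc_eval z Ttri; rewrite /untwist_contract /tens_eval /T => <-.
rewrite -{2}(counit z).1 scaler_sumr; apply: eq_bigr => p _.
by rewrite -scaler_suml -linear_sum mulr_antipode_suml linearZ scalerA mulrC.
Qed.

Lemma HHM_zero_HH_zero (M : zmodType) (act : H -> M -> M) alpha m :
  left_module act -> not_torsion act m -> HHM_zero Delta act [:: (alpha, m)] -> HH_zero alpha.
Proof.
case=> actM _ actDl actDr m_free alpha_m0.
pose theta := [seq (p.1 * S q.1, q.2) | p <- alpha, q <- Delta p.2].
have theta0 : HH_zero theta.
  apply: ktens_zero_contract => f.
  pose F (a : HH H) (y : M) := act (tens_eval (twist_contract f) a) y.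
  have F_cat a a' y : F (a ++ a') y = F a y + F a' y by rewrite /F /tens_eval big_cat actDl.
  have F_add a y y' : F a (y + y') = F a y + F a y' by rewrite /F actDr.
  have F_ract a h y : F (HH_ract Delta a h) y = F a (act h y).
    rewrite /F -actM; congr (act _ y).
    rewrite /HH_ract /HH_mul /tens_eval big_allpairs_dep mulr_suml; apply: eq_bigr => p _.
    exact: twist_contract_mul.
  have F_eq a a' y : HH_eq a a' -> F a y = F a' y.
    by move=> e; rewrite /F (HH_eq_eval (twist_contract_bilinear f) e).
  have := tens_zero_balanced F_cat F_add F_ract F_eq alpha_m0.
  by rewrite big_seq1 /F => /m_free; rewrite /tens_eval big_allpairs_dep.
apply: ktens_zero_contract => g.
have := HH_zero_eval (untwist_contract_bilinear g) theta0.
rewrite /tens_eval big_allpairs_dep /= => e; rewrite -[RHS]e; apply: eq_bigr => p _.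
by rewrite untwist_twist.
Qed.

End HopfAlgebra.

Lemma HH_zero_HHM_zero (k : fieldType) (H : algType k) (Delta : H -> HH H)
    (M : zmodType) (act : H -> M -> M) alpha m :
  HH_zero alpha -> HHM_zero Delta act [:: (alpha, m)].
Proof.
move=> alpha0; pose rel := tens_rel (@HH_eq k H) cat (HH_ract Delta) act.
have alpha_nil : eqmod rel [:: (1, (alpha, m))] [:: (1, ([::], m))].
  by apply: eqmod_gen2; apply: Or44; exists alpha, [::], m; rewrite /HH_eq cats0.
have nil0 : eqmod rel [:: (1, ([::] : HH H, m))] [::].
  by apply: eqmod_double_nil; apply: eqmod_gen3; apply: Or41; exists [::], [::], m.
exact: eqmod_in_subgroup (eqmod_trans alpha_nil nil0) (in_subgroup_nil _).
Qed.

Theorem lemma2p8 (k : fieldType) (H : algType k)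
    (Delta : H -> HH H) (eps : H -> k) (S : H -> H)
    (hHopf : hopf_algebra Delta eps S) (hcoc : cocommutative Delta)
    (M : zmodType) (act : H -> M -> M) (hM : left_module act)
    (alpha : HH H) (m : M) (hm : not_torsion act m) :
  HHM_zero Delta act [:: (alpha, m)] <-> HH_zero alpha.
Proof.
case: hHopf => DeltaD [DeltaM [_ [coassoc [_ [epsM [_ [counit [S_lin antipode]]]]]]]].
split; last exact: HH_zero_HHM_zero.
exact: (HHM_zero_HH_zero DeltaD DeltaM coassoc epsM counit S_lin antipode hM hm).
Qed.
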